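(* Let $B\in\mathbb R^{n\times m}$, let $\mathcal I_{\mathcal V}$ be a symmetric positive definite $m\times m$ matrix, and let $f:\mathbb R^m\to\mathbb R$ be differentiable with $f\in\mathcal S^{1,1}_{\mu_{f,\mathcal I_{\mathcal V}},L_{f,\mathcal I_{\mathcal V}}}$ with respect to $\mathcal I_{\mathcal V}$. For $u_1,u_2\in\mathbb R^m$ and $p_1,p_2\in\mathbb R^n$ set $v_i=u_i+\mathcal I_{\mathcal V}^{-1}B^\top p_i$. Then $$\big(\nabla f(u_1)-\nabla f(u_2),\ \mathcal I_{\mathcal V}^{-1}B^\top(p_1-p_2)\big)\ \ge\ \frac{\mu_{f,\mathcal I_{\mathcal V}}}{2}\|v_1-v_2\|^2_{\mathcal I_{\mathcal V}}-\frac{L_{f,\mathcal I_{\mathcal V}}}{2}\|B^\top(p_1-p_2)\|^2_{\mathcal I_{\mathcal V}^{-1}}-\frac12\big(\nabla f(u_1)-\nabla f(u_2),u_1-u_2\big).$$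
   Context: For a symmetric positive definite matrix $M$, $\|x\|_M=(Mx,x)^{1/2}$. The Bregman divergence is $D_f(y,x)=f(y)-f(x)-(\nabla f(x),y-x)$, and $f\in\mathcal S^{1,1}_{\mu_{f,M},L_{f,M}}$ with respect to $M$ means $\frac{\mu_{f,M}}{2}\|x-y\|_M^2\le D_f(y,x)\le\frac{L_{f,M}}{2}\|x-y\|_M^2$ for all $x,y$ (with $\mu_{f,M}\ge0$). *)

From HB Require Import structures.
From mathcomp Require Import all_boot all_order all_algebra.
From mathcomp Require Import all_classical all_reals all_analysis.
Set Implicit Arguments. Unset Strict Implicit. Unset Printing Implicit Defensive.
Import Order.TTheory GRing.Theory Num.Theory.
Import numFieldNormedType.Exports.
Local Open Scope ring_scope.

Definition dotp {R : realType} {k : nat} (x y : 'cV[R]_k) : R :=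
  \sum_(i < k) x i 0 * y i 0.

Definition spd {R : realType} {k : nat} (M : 'M[R]_k) : Prop :=
  M^T = M /\ (forall x : 'cV[R]_k, x != 0 -> 0 < dotp (M *m x) x).

Definition normM {R : realType} {k : nat} (M : 'M[R]_k) (x : 'cV[R]_k) : R :=
  Num.sqrt (dotp (M *m x) x).

Definition grad {R : realType} {k : nat} (f : 'cV[R]_k -> R) (x : 'cV[R]_k)
  : 'cV[R]_k := \col_i ('d f x (delta_mx i 0 : 'cV[R]_k)).

Definition bregman {R : realType} {k : nat} (f : 'cV[R]_k -> R)
  (y x : 'cV[R]_k) : R := f y - f x - dotp (grad f x) (y - x).

Definition S11 {R : realType} {k : nat} (M : 'M[R]_k) (mu L : R)
  (f : 'cV[R]_k -> R) : Prop :=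
  0 <= mu /\
  forall x y : 'cV[R]_k,
    mu / 2 * normM M (x - y) ^+ 2 <= bregman f y x /\
    bregman f y x <= L / 2 * normM M (x - y) ^+ 2.

From HB Require Import structures.
From mathcomp Require Import all_boot all_order all_algebra.
From mathcomp Require Import all_classical all_reals all_analysis.
From mathcomp Require Import lra.
Import Order.TTheory GRing.Theory Num.Theory.
Import numFieldNormedType.Exports.
Local Open Scope ring_scope.

(* Put d := u1 - u2 and w := IV^-1 B^T (p1 - p2), so that v1 - v2 = d + w and
   ||B^T (p1 - p2)||_{IV^-1} = ||w||_IV.  For the two test points u1 + w and
   u2 - w the gradient terms telescope:
     D(u1+w, u2) - D(u1+w, u1) + D(u2-w, u1) - D(u2-w, u2)
       = (grad f u1 - grad f u2, d + 2 w),
   and the S^{1,1} bounds give each of the two differences the lower bound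
   mu/2 ||d + w||^2 - L/2 ||w||^2. *)

Section Dotp.
Context {R : realType} {k : nat}.
Implicit Types (x y z : 'cV[R]_k) (M : 'M[R]_k).

Lemma dotpC x y : dotp x y = dotp y x.
Proof. by apply: eq_bigr => i _; rewrite mulrC. Qed.

Lemma dotp0l y : dotp 0 y = 0.
Proof. by rewrite /dotp big1 // => i _; rewrite mxE mul0r. Qed.

Lemma dotpDr x y z : dotp z (x + y) = dotp z x + dotp z y.
Proof. by rewrite /dotp -big_split; apply: eq_bigr => i _; rewrite mxE mulrDr. Qed.

Lemma dotpNr x z : dotp z (- x) = - dotp z x.
Proof. by rewrite /dotp -sumrN; apply: eq_bigr => i _; rewrite mxE mulrN. Qed.

Lemma dotpDl x y z : dotp (x + y) z = dotp x z + dotp y z.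
Proof. by rewrite dotpC dotpDr !(dotpC z). Qed.

Lemma dotpNl x z : dotp (- x) z = - dotp x z.
Proof. by rewrite dotpC dotpNr dotpC. Qed.

Lemma normMN M x : normM M (- x) = normM M x.
Proof. by rewrite /normM mulmxN dotpNl dotpNr opprK. Qed.

Lemma spd_unitmx M : spd M -> M \in unitmx.
Proof.
move=> [symM posM]; rewrite unitmxE unitfE; apply/negP => /det0P [v v_neq0 vM0].
have vT_neq0 : v^T != 0.
  by apply: contra v_neq0 => /eqP vT0; rewrite -(trmxK v) vT0 trmx0.
have := posM _ vT_neq0.
by rewrite -symM -trmx_mul vM0 trmx0 dotp0l ltxx.
Qed.

Lemma normM_invmx M y :
  M \in unitmx -> normM (invmx M) y = normM M (invmx M *m y).
Proof. by move=> Mu; rewrite /normM mulmxA mulmxV // mul1mx dotpC. Qed.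

End Dotp.

Section Bregman.
Context {R : realType} {k : nat} (f : 'cV[R]_k -> R).
Implicit Types (x y w : 'cV[R]_k).

Lemma bregman_cross x y (z1 z2 : 'cV[R]_k) :
  bregman f z1 y - bregman f z1 x + (bregman f z2 x - bregman f z2 y)
  = dotp (grad f x - grad f y) (z1 - z2).
Proof.
(* Generalize the gradients first: matching the sum patterns of the dotp
   lemmas against the matrix [grad f x] unfolds it and practically diverges. *)
rewrite /bregman; move: (grad f x) (grad f y) => gx gy.
rewrite !(dotpDl, dotpNl, dotpDr, dotpNr); lra.
Qed.

Lemma S11_bregman_gap {M : 'M[R]_k} {mu L} x y w : S11 M mu L f ->
  mu / 2 * normM M (x - y + w) ^+ 2 - L / 2 * normM M w ^+ 2
  <= bregman f (x + w) y - bregman f (x + w) x.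
Proof.
case=> _ hf; have [lo _] := hf y (x + w); have [_ up] := hf x (x + w).
have yxw : y - (x + w) = - (x - y + w).
  by rewrite [RHS]opprD opprB opprD addrA.
have xxw : x - (x + w) = - w by rewrite opprD addrA subrr add0r.
rewrite yxw normMN in lo; rewrite xxw normMN in up; lra.
Qed.

End Bregman.

Theorem lemma3p1 (R : realType) (n m : nat) (B : 'M[R]_(n, m)) (IV : 'M[R]_m)
  (f : 'cV[R]_m -> R) (mu L : R)
  (hIV : spd IV)
  (hdiff : forall x : 'cV[R]_m, differentiable f x)
  (hf : S11 IV mu L f)
  (u1 u2 : 'cV[R]_m) (p1 p2 : 'cV[R]_n) :
  let v1 := u1 + invmx IV *m B^T *m p1 in
  let v2 := u2 + invmx IV *m B^T *m p2 in
  mu / 2 * normM IV (v1 - v2) ^+ 2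
    - L / 2 * normM (invmx IV) (B^T *m (p1 - p2)) ^+ 2
    - 1 / 2 * dotp (grad f u1 - grad f u2) (u1 - u2)
  <= dotp (grad f u1 - grad f u2) (invmx IV *m B^T *m (p1 - p2)).
Proof.
cbv zeta; set w := invmx IV *m B^T *m (p1 - p2).
have v12 : u1 + invmx IV *m B^T *m p1 - (u2 + invmx IV *m B^T *m p2)
           = u1 - u2 + w by rewrite /w mulmxBr opprD addrACA.
have qw : normM (invmx IV) (B^T *m (p1 - p2)) = normM IV w.
  by rewrite normM_invmx ?spd_unitmx // mulmxA.
rewrite v12 qw; clearbody w.
have gap1 := S11_bregman_gap f u1 u2 w hf.
have gap2 := S11_bregman_gap f u2 u1 (- w) hf.
have u21w : u2 - u1 - w = - (u1 - u2 + w) by rewrite opprD opprB.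
rewrite u21w !normMN in gap2.
have cross := bregman_cross f u1 u2 (u1 + w) (u2 - w).
move: (grad f u1 - grad f u2) cross => g cross.
rewrite !(dotpDr, dotpNr) in cross *; lra.
Qed.
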